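(* Let $L$ be an oriented, ordered virtual link diagram with affine bilabeling $C$. Let $L_i$ be a component of weight $n$ whose starting point $s$ carries bilabel $(a_1,a_2)$. Let $c$ be the first classical crossing met by $L_i$ after $s$, and suppose $c$ is a self-crossing of $L_i$. Let $\iota\in\{\pm1\}$ be the index change of this passage of $L_i$ through $c$. Let $C'$ be obtained by moving the starting point of $L_i$ forward to a point $s'$ just past this passage through $c$, with the same starting bilabel, and keeping everything else the same. Then: - the weight of $c$ changes by $+n$ if the passage is the overstrand of $c$, and by $-n$ if it is the understrand; and - all other labels of $L_i$ (those not on the segment between $s$ and $s'$) shift by $-\iota$, the opposite of the index change.
   Context: **Diagrams.** A virtual link diagram is an oriented planar diagram of ordered closed curves $L_1,\dots,L_n$ (components) with classical and virtual crossings. **Crossing conventions.** Draw a classical crossing with both strands oriented upward. - The bottom-left-to-top-right strand has index change $-1$; the bottom-right-to-top-left strand has index change $+1$. - The crossing is positive if the overstrand is the bottom-left-to-top-right strand, and negative otherwise. - Self-crossings have both strands on one component; external crossings have strands on different components. - The weight of a component $L_i$ is the sum of the index changes of $L_i$ over its passages through external classical crossings. **Affine bilabeling.** - Each component gets a starting point with bilabel $(a^{(i)}_1,a^{(i)}_2)$ of formal integer variables. - The bilabel is carried along the component in its orientation and is unchanged at virtual crossings. - At a classical crossing with index change $\varepsilon$, the first entry changes by $\varepsilon$ at a self-crossing, and the second entry changes by $\varepsilon$ at an external crossing. - On returning to the starting point, the label is off by the component's weight in the second entry; this discrepancy is placed at the starting point. **Crossing weight.** For $|(x,y)|=x+y$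 and $c$ drawn with both strands upward: - if $c$ is positive, $W(c)=|\text{bottom-left}|-|\text{top-left}|$; - if $c$ is negative, $W(c)=|\text{bottom-right}|-|\text{top-right}|$. *)

(* Virtual crossings carry no data (bilabels are
   unchanged there), so a component is recorded as the cyclic sequence of its
   passages through classical crossings, read in the orientation starting at
   its starting point. *)
From mathcomp Require Import all_boot all_order all_algebra.
Set Implicit Arguments. Unset Strict Implicit. Unset Printing Implicit Defensive.
Import GRing.Theory Num.Theory.
Local Open Scope ring_scope.

(* Draw c with both strands
   oriented upward; (c, true) is the passage along the bottom-left-to-top-right
   strand, (c, false) the passage along the bottom-right-to-top-left strand. *)
Definition passage (N : nat) := ('I_N * bool)%type.

Section VirtualDiagrams.
Variables (m N : nat).
(* comp i : passages of component L_i, in order, starting from its starting point *)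
Variable comp : 'I_m -> seq (passage N).
(* pos c = true iff the overstrand of c is the bottom-left-to-top-right strand,
   i.e. iff c is a positive crossing *)
Variable pos : 'I_N -> bool.

Definition wf_diagram : Prop :=
  forall p : passage N, (\sum_(i < m) count_mem p (comp i))%N = 1%N.

Definition idx_change (p : passage N) : int := if p.2 then -1 else 1.

Definition is_over (p : passage N) : bool := p.2 == pos p.1.

Definition comp_of (p : passage N) : option 'I_m := [pick i | p \in comp i].

Definition is_self (c : 'I_N) : bool :=
  match comp_of (c, true), comp_of (c, false) with
  | Some i, Some j => i == j
  | _, _ => false
  end.

Definition comp_weight (i : 'I_m) : int :=
  \sum_(p <- comp i | ~~ is_self p.1) idx_change p.

(* Affine bilabeling with formal integer variables a1 i, a2 i (starting bilabel
   of L_i).  Segment k of L_i (0 <= k <= size (comp i)) is the part of L_i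
   between passage k-1 and passage k; segment 0 starts at the starting point
   and segment (size (comp i)) ends at the starting point (it carries the
   discrepancy). *)
Definition label (a1 a2 : 'I_m -> int) (i : 'I_m) (k : nat) : int * int :=
  (a1 i + \sum_(p <- take k (comp i) | is_self p.1) idx_change p,
   a2 i + \sum_(p <- take k (comp i) | ~~ is_self p.1) idx_change p).

Definition bl_norm (x : int * int) : int := x.1 + x.2.

Definition label_in (a1 a2 : 'I_m -> int) (p : passage N) : int * int :=
  if comp_of p is Some i then label a1 a2 i (index p (comp i)) else (0, 0).
Definition label_out (a1 a2 : 'I_m -> int) (p : passage N) : int * int :=
  if comp_of p is Some i then label a1 a2 i (index p (comp i)).+1 else (0, 0).

(* W(c): positive: |bottom-left| - |top-left|; negative: |bottom-right| - |top-right| *)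
Definition crossing_weight (a1 a2 : 'I_m -> int) (c : 'I_N) : int :=
  if pos c then bl_norm (label_in a1 a2 (c, true)) - bl_norm (label_out a1 a2 (c, false))
  else bl_norm (label_in a1 a2 (c, false)) - bl_norm (label_out a1 a2 (c, true)).

Definition move_start (i0 : 'I_m) : 'I_m -> seq (passage N) :=
  fun i => if i == i0 then rot 1 (comp i) else comp i.

End VirtualDiagrams.

(* Rotating the passage sequence of L_i by one drops the passage (c, b) from
   the front of every initial segment, so every label of L_i before the new
   starting point loses the contribution iota of that self-crossing to its
   first entry.  The passage (c, b) is now met last, with incoming label
   (a1 - iota, a2 + n): the self-crossing passages of a component cancel in
   pairs, so the full turn around L_i only changes the second entry, by the
   weight n.  Hence the bilabel norms at c shift by n - iota at the moved
   passage and by -iota at the other one, and W(c) changes by +n or -n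
   according to which of the two enters W(c) with a plus sign. *)

From mathcomp Require Import all_boot all_order all_algebra zify ring.
Import GRing.Theory Num.Theory.
Local Open Scope ring_scope.
Set Implicit Arguments. Unset Strict Implicit.

Section MoveStart.
Variables (m N : nat) (comp : 'I_m -> seq (passage N)) (i0 : 'I_m).

Lemma mem_move_start j : move_start comp i0 j =i comp j.
Proof. by move=> p; rewrite /move_start; case: eqP => // ->; rewrite mem_rot. Qed.

Lemma comp_of_move_start p : comp_of (move_start comp i0) p = comp_of comp p.
Proof. by apply: eq_pick => j; rewrite /= mem_move_start. Qed.

Lemma is_self_move_start d : is_self (move_start comp i0) d = is_self comp d.
Proof. by rewrite /is_self !comp_of_move_start. Qed.

Lemma comp_weight_move_start j :
  comp_weight (move_start comp i0) j = comp_weight comp j.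
Proof.
rewrite /comp_weight; under eq_bigl do rewrite is_self_move_start.
by rewrite /move_start; case: eqP => // ->; apply: perm_big; rewrite perm_rot.
Qed.

Lemma wf_move_start : wf_diagram comp -> wf_diagram (move_start comp i0).
Proof.
move=> hwf p; rewrite -(hwf p); apply: eq_bigr => j _.
by rewrite /move_start; case: eqP => // ->; apply/seq.permP; rewrite perm_rot.
Qed.

End MoveStart.

Lemma crossing_weightE m N (comp : 'I_m -> seq (passage N)) pos a1 a2 c :
  crossing_weight comp pos a1 a2 c =
  bl_norm (label_in comp a1 a2 (c, pos c)) - bl_norm (label_out comp a1 a2 (c, ~~ pos c)).
Proof. by rewrite /crossing_weight; case: (pos c). Qed.

Section WellFormed.
Variables (m N : nat) (comp : 'I_m -> seq (passage N)).
Hypothesis hwf : wf_diagram comp.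

Lemma count_mem_comp_split (p : passage N) i :
  (count_mem p (comp i) + \sum_(j < m | j != i) count_mem p (comp j))%N = 1%N.
Proof. by rewrite -(hwf p) [in RHS](bigD1 i). Qed.

Lemma uniq_comp i : uniq (comp i).
Proof.
apply: count_mem_uniq => p; have := count_mem_comp_split p i.
case: (boolP (p \in comp i)) => [hp | /count_memPn -> //].
have : count_mem p (comp i) != 0%N by apply: contraL hp => /eqP/count_memPn.
lia.
Qed.

Lemma mem_comp_inj (p : passage N) i j : p \in comp i -> p \in comp j -> i = j.
Proof.
move=> hi hj; have [// | hij] := eqVneq i j; exfalso.
have := count_mem_comp_split p i; rewrite (bigD1 j) 1?eq_sym //=.
by rewrite !count_uniq_mem ?uniq_comp // hi hj; lia.
Qed.

Lemma comp_ofE (p : passage N) i : p \in comp i -> comp_of comp p = Some i.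
Proof.
move=> hi; rewrite /comp_of; case: pickP => [j hj | /(_ i)]; last by rewrite hi.
by rewrite (mem_comp_inj hj hi).
Qed.

Lemma self_crossing_mem d bb i :
  is_self comp d -> (d, bb) \in comp i -> (d, ~~ bb) \in comp i.
Proof.
rewrite /is_self => hs hin.
case: bb hin hs => hin; rewrite (comp_ofE hin) /comp_of;
  by case: pickP => // j hj /eqP eij; subst j.
Qed.

Lemma sum_self_idx_change_eq0 i :
  \sum_(p <- comp i | is_self comp p.1) idx_change p = 0.
Proof.
rewrite -big_filter; set s := filter _ _.
pose flip (p : passage N) := (p.1, ~~ p.2).
have flipK : involutive flip by case=> d bb; rewrite /flip negbK.
have mem_flip p : p \in s -> flip p \in s.
  by case: p => d bb; rewrite !mem_filter /= => /andP[hs hin]; rewrite hs self_crossing_mem.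
have uniq_s : uniq s by rewrite filter_uniq // uniq_comp.
have perm_flip : perm_eq s (map flip s).
  apply: uniq_perm => //; first by rewrite (map_inj_uniq (can_inj flipK)).
  move=> p; apply/idP/mapP => [hp | [q hq ->]]; last exact: mem_flip.
  by exists (flip p); rewrite ?flipK ?mem_flip.
have : \sum_(p <- s) idx_change p = - \sum_(p <- s) idx_change p.
  rewrite {1}(perm_big _ perm_flip) big_map -sumrN; apply: eq_bigr => -[d bb] _.
  by rewrite /idx_change; case: bb; rewrite ?opprK.
move: (\sum_(p <- s) _) => x; lia.
Qed.

Lemma label_size a1 a2 i :
  label comp a1 a2 i (size (comp i)) = (a1 i, a2 i + comp_weight comp i).
Proof. by rewrite /label take_size sum_self_idx_change_eq0 addr0. Qed.

Lemma label_inE a1 a2 (p : passage N) i :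
  p \in comp i -> label_in comp a1 a2 p = label comp a1 a2 i (index p (comp i)).
Proof. by move=> hp; rewrite /label_in (comp_ofE hp). Qed.

Lemma label_outE a1 a2 (p : passage N) i :
  p \in comp i -> label_out comp a1 a2 p = label comp a1 a2 i (index p (comp i)).+1.
Proof. by move=> hp; rewrite /label_out (comp_ofE hp). Qed.

End WellFormed.

Section FirstSelfCrossing.
Variables (m N : nat) (comp : 'I_m -> seq (passage N)) (a1 a2 : 'I_m -> int).
Variables (i : 'I_m) (c : 'I_N) (b : bool) (rest : seq (passage N)).
Hypothesis hfirst : comp i = (c, b) :: rest.
Hypothesis hself : is_self comp c.

Local Notation comp' := (move_start comp i).
Local Notation iota := (idx_change (c, b)).

Lemma move_start_first : comp' i = rest ++ [:: (c, b)].
Proof. by rewrite /move_start eqxx hfirst rot1_cons cats1. Qed.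

Lemma label_move_start k : (k <= size rest)%N ->
  label comp' a1 a2 i k =
  ((label comp a1 a2 i k.+1).1 - iota, (label comp a1 a2 i k.+1).2).
Proof.
move=> hk; rewrite /label move_start_first takel_cat // hfirst /= !big_cons /= hself.
under eq_bigl do rewrite is_self_move_start.
under [in X in (_, X)]eq_bigl do rewrite is_self_move_start.
by congr (_, _); ring.
Qed.

Hypothesis hwf : wf_diagram comp.

Lemma first_notin_rest : (c, b) \notin rest.
Proof. by have := uniq_comp hwf i; rewrite hfirst cons_uniq => /andP[]. Qed.

Lemma other_mem_rest : (c, ~~ b) \in rest.
Proof.
have := self_crossing_mem hwf hself (_ : (c, b) \in comp i).
by rewrite hfirst mem_head in_cons xpair_eqE eqxx /=; case: (b) => /(_ isT).
Qed.

Lemma index_first_move_start : index (c, b) (comp' i) = size rest.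
Proof. by rewrite move_start_first index_cat (negbTE first_notin_rest) /= eqxx addn0. Qed.

Lemma label_in_move_start_first :
  label_in comp' a1 a2 (c, b) =
  ((label_in comp a1 a2 (c, b)).1 - iota,
   (label_in comp a1 a2 (c, b)).2 + comp_weight comp i).
Proof.
have hmem : (c, b) \in comp i by rewrite hfirst mem_head.
rewrite (label_inE (wf_move_start i hwf) _ _ (_ : _ \in comp' i)) ?mem_move_start //.
rewrite (label_inE hwf _ _ hmem) index_first_move_start label_move_start //.
have -> : (size rest).+1 = size (comp i) by rewrite hfirst.
by rewrite label_size // hfirst /= eqxx /label take0 !big_nil !addr0.
Qed.

Lemma label_out_move_start_first :
  label_out comp' a1 a2 (c, b) =
  ((label_out comp a1 a2 (c, b)).1 - iota,
   (label_out comp a1 a2 (c, b)).2 + comp_weight comp i).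
Proof.
have hmem : (c, b) \in comp i by rewrite hfirst mem_head.
rewrite (label_outE (wf_move_start i hwf) _ _ (_ : _ \in comp' i)) ?mem_move_start //.
have -> : (index (c, b) (comp' i)).+1 = size (comp' i).
  by rewrite index_first_move_start move_start_first size_cat addn1.
rewrite label_size; last exact: wf_move_start.
rewrite comp_weight_move_start.
rewrite (label_outE hwf _ _ hmem) /label hfirst /= eqxx !big_cons hself take0 !big_nil /=.
by congr (_, _); ring.
Qed.

Section RestPassage.
Variable p : passage N.
Hypothesis hp : p \in rest.

Lemma index_rest : index p (comp i) = (index p rest).+1.
Proof.
have hne : (c, b) != p by apply: contraNneq first_notin_rest => ->.
by rewrite hfirst /= (negbTE hne).
Qed.

Lemma index_rest_move_start : index p (comp' i) = index p rest.
Proof. by rewrite move_start_first index_cat hp. Qed.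

Lemma mem_rest_comp : p \in comp i.
Proof. by rewrite hfirst in_cons hp orbT. Qed.

Lemma label_in_move_start_rest :
  label_in comp' a1 a2 p = ((label_in comp a1 a2 p).1 - iota, (label_in comp a1 a2 p).2).
Proof.
rewrite (label_inE (wf_move_start i hwf) _ _ (_ : _ \in comp' i)) ?mem_move_start ?mem_rest_comp //.
by rewrite (label_inE hwf _ _ mem_rest_comp) index_rest index_rest_move_start label_move_start // index_size.
Qed.

Lemma label_out_move_start_rest :
  label_out comp' a1 a2 p = ((label_out comp a1 a2 p).1 - iota, (label_out comp a1 a2 p).2).
Proof.
rewrite (label_outE (wf_move_start i hwf) _ _ (_ : _ \in comp' i)) ?mem_move_start ?mem_rest_comp //.
by rewrite (label_outE hwf _ _ mem_rest_comp) index_rest index_rest_move_start label_move_start // index_mem.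
Qed.

End RestPassage.

Lemma crossing_weight_move_start pos :
  crossing_weight comp' pos a1 a2 c =
  crossing_weight comp pos a1 a2 c
  + (if is_over pos (c, b) then comp_weight comp i else - comp_weight comp i).
Proof.
rewrite !crossing_weightE /is_over /=.
have hrest := other_mem_rest.
case: (eqVneq b (pos c)) => [<- | hb].
  rewrite label_in_move_start_first (label_out_move_start_rest hrest) /bl_norm /=.
  by ring.
have -> : pos c = ~~ b by apply/esym/addbP; rewrite -negb_eqb.
rewrite negbK (label_in_move_start_rest hrest) label_out_move_start_first /bl_norm /=.
by ring.
Qed.

End FirstSelfCrossing.

Theorem lemma2 (m N : nat) (comp : 'I_m -> seq (passage N)) (pos : 'I_N -> bool)
  (a1 a2 : 'I_m -> int) (hwf : wf_diagram comp)
  (i : 'I_m) (c : 'I_N) (b : bool) (rest : seq (passage N))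
  (hfirst : comp i = (c, b) :: rest) (hself : is_self comp c) :
  let n := comp_weight comp i in
  let iota := idx_change (c, b) in
  let comp' := move_start comp i in
  crossing_weight comp' pos a1 a2 c
    = crossing_weight comp pos a1 a2 c + (if is_over pos (c, b) then n else - n)
  /\ forall k : nat, (1 <= k <= size (comp i))%N ->
       label comp' a1 a2 i k.-1
         = ((label comp a1 a2 i k).1 - iota, (label comp a1 a2 i k).2).
Proof.
move=> n iota comp'; split; first exact: crossing_weight_move_start hfirst hself hwf pos.
move=> k /andP[hk1 hk]; have hk_rest : (k.-1 <= size rest)%N by move: hk; rewrite hfirst /=; lia.
by rewrite (label_move_start _ _ hfirst hself hk_rest) prednK.
Qed.
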